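(* For all integers $0\le k_1\le k_2<k_3$, $$\sigma_2(\mathsf S_{k_1,k_2,k_3})=\sigma_2\big((I\otimes A_H)\,G_{k_2\bmod s}\,(I\otimes A_H)\big),$$ where singular values of $\mathsf S_{k_1,k_2,k_3}:\mathbb R^{W[k_2+1,k_3]}\to\mathbb R^{W[k_1,k_2]}$ are taken with respect to the uniform probability measures on $W[k_2+1,k_3]$ and $W[k_1,k_2]$.
   Context: $G$ is a $d_1$-regular undirected graph on $[n]$ with a locally invertible rotation map $\mathrm{rot}_G$; $H$ is a $d_2$-regular undirected graph on $[d_1]^s$ with normalized adjacency $A_H$ and a fixed labeling of its edges at each vertex. $\mathrm{Rot}_i$ ($0\le i<s$) sends $(v,(a_0,\dots,a_{s-1}))$ to $(v',(a_0,\dots,a_i',\dots,a_{s-1}))$ with $(v',a_i')=\mathrm{rot}_G(v,a_i)$, and $G_i$ is its permutation matrix. For $0\le k_1\le k_2$, $W[k_1,k_2]$ is the set of tuples $(x_{k_1},(a_{k_1},b_{k_1}),\dots,(a_{k_2-1},b_{k_2-1}))$ with $x_{k_1}\in[n]\times[d_1]^s$, $(a_i,b_i)\in[d_2]^2$, determining vertices $x_{k_1},\dots,x_{k_2}$ where $x_{i+1}$ is obtained from $x_i$ by an $H$-step along edge $a_i$, then $\mathrm{Rot}_{i\bmod s}$, then an $H$-step along edge $b_i$. For $k_1\le k_2<k_3$, a uniform $\omega\in W[k_1,k_3]$ splits as $\omega_1\in W[k_1,k_2]$ (start vertex and first $k_2-k_1$ label pairs) and $\omega_2\in W[k_2+1,k_3]$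 (vertex $x_{k_2+1}$ and remaining labels); $(\mathsf S_{k_1,k_2,k_3}f)(w)=\mathbb E[f(\omega_2)\mid\omega_1=w]$. $\sigma_2$ denotes the second largest singular value. *)

(* Real scalars: an arbitrary real closed field R (rcfType),
   which includes the real numbers; the statement is purely algebraic. *)
From HB Require Import structures.
From mathcomp Require Import all_boot all_order all_algebra.
From Stdlib Require Import ClassicalEpsilon.

Set Implicit Arguments.
Unset Strict Implicit.
Unset Printing Implicit Defensive.

Import Order.TTheory GRing.Theory Num.Theory.
Local Open Scope ring_scope.

(* An operator R^Y -> R^X is given by its kernel K : X -> Y -> R,           *)
(*   (K f)(x) = \sum_y K x y * f y.                                         *)

Section SingularValues.
Variable R : rcfType.

(* the eigenvalues of a square matrix counted with algebraic multiplicity,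
   listed in non-increasing order (chosen classically; such a list exists
   and is unique whenever the characteristic polynomial splits over R,
   which is the case for the self-adjoint operators considered below). *)
Definition eigs_desc m (A : 'M[R]_m) : seq R :=
  epsilon (inhabits [::])
    (fun l : seq R => sorted (fun a b => b <= a) l /\
                      char_poly A = \prod_(x <- l) ('X - x%:P)).

Definition kmx (T : finType) (K : T -> T -> R) : 'M[R]_#|T| :=
  \matrix_(i, j) K (enum_val i) (enum_val j).

(* adjoint of K : R^Y -> R^X w.r.t. <f,g>_muX = \sum_x muX x f x g x and
   the analogous inner product on R^Y *)
Definition wadj (X Y : finType) (muX : X -> R) (muY : Y -> R)
  (K : X -> Y -> R) : Y -> X -> R :=
  fun y x => muX x * K x y / muY y.

Definition wgram (X Y : finType) (muX : X -> R) (muY : Y -> R)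
  (K : X -> Y -> R) : Y -> Y -> R :=
  fun y y' => \sum_(x : X) wadj muX muY K y x * K x y'.

Definition sing_vals (X Y : finType) (muX : X -> R) (muY : Y -> R)
  (K : X -> Y -> R) : seq R :=
  map Num.sqrt (eigs_desc (kmx (wgram muX muY K))).

Definition unif (T : finType) : T -> R := fun _ => 1 / #|T|%:R.

Definition sigma2 (X Y : finType) (K : X -> Y -> R) : R :=
  nth 0 (sing_vals (@unif X) (@unif Y) K) 1.

End SingularValues.

(*   vertices of G : 'I_n ;  edge labels of G : 'I_d1                        *)
(*   vertices of H : [d1]^s = {ffun 'I_s -> 'I_d1} ; labels of H : 'I_d2    *)
(*   rot : rotation map of G ; nbr u a : the neighbour of u along edge a    *)

Notation Hvert d1 s := {ffun 'I_s -> 'I_d1}.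
Notation Vtx n d1 s := ('I_n * {ffun 'I_s -> 'I_d1})%type.
Notation Lab d2 := ('I_d2 * 'I_d2)%type.
(* W[k1,k2] : start vertex x_{k1} and the k2-k1 label pairs
   (a_{k1},b_{k1}), ..., (a_{k2-1},b_{k2-1}), in this order *)
Notation Wset n d1 s d2 k1 k2 :=
  ('I_n * {ffun 'I_s -> 'I_d1} * (k2 - k1).-tuple ('I_d2 * 'I_d2))%type.

Section Walks.
Variables (n d1 s d2 : nat).
Variable rot : 'I_n * 'I_d1 -> 'I_n * 'I_d1.
Variable nbr : {ffun 'I_s -> 'I_d1} -> 'I_d2 -> {ffun 'I_s -> 'I_d1}.

Definition Hstep (a : 'I_d2) (x : Vtx n d1 s) : Vtx n d1 s := (x.1, nbr x.2 a).

Definition Rotm (j : nat) (x : Vtx n d1 s) : Vtx n d1 s :=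
  match [pick t : 'I_s | val t == (j %% s)%N] with
  | Some t => let p := rot (x.1, x.2 t) in
              (p.1, [ffun u => if u == t then p.2 else x.2 u])
  | None => x
  end.

Definition wstep (j : nat) (x : Vtx n d1 s) (p : Lab d2) : Vtx n d1 s :=
  Hstep p.2 (Rotm j (Hstep p.1 x)).

Fixpoint walk (j : nat) (x : Vtx n d1 s) (ls : seq (Lab d2)) : Vtx n d1 s :=
  match ls with
  | [::] => x
  | p :: ls' => walk j.+1 (wstep j x p) ls'
  end.

Variable R : rcfType.

(* Kernel of S_{k1,k2,k3} : R^{W[k2+1,k3]} -> R^{W[k1,k2]}:
   (S f)(w) = E[f(omega2) | omega1 = w] for omega uniform on W[k1,k3], i.e.
   S w w' = P[omega1 = w /\ omega2 = w'] / P[omega1 = w]. *)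
Definition Skern (k1 k2 k3 : nat)
  (w : Wset n d1 s d2 k1 k2) (w' : Wset n d1 s d2 k2.+1 k3) : R :=
  let joint := #|[set om : Wset n d1 s d2 k1 k3 |
                    [&& om.1 == w.1, take (k2 - k1)%N om.2 == val w.2,
                        walk k1 om.1 (take (k2 - k1)%N.+1 om.2) == w'.1 &
                        drop (k2 - k1)%N.+1 om.2 == val w'.2]]| in
  let marg := #|[set om : Wset n d1 s d2 k1 k3 |
                    (om.1 == w.1) && (take (k2 - k1)%N om.2 == val w.2)]| in
  joint%:R / marg%:R.

Definition AH (u w : {ffun 'I_s -> 'I_d1}) : R :=
  #|[set a : 'I_d2 | nbr u a == w]|%:R / d2%:R.

Definition IAH (x y : Vtx n d1 s) : R := (x.1 == y.1)%:R * AH x.2 y.2.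

Definition Gperm (j : nat) (x y : Vtx n d1 s) : R := (Rotm j x == y)%:R.

Definition Pker (j : nat) (x y : Vtx n d1 s) : R :=
  \sum_(z : Vtx n d1 s) \sum_(z' : Vtx n d1 s) IAH x z * Gperm j z z' * IAH z' y.

End Walks.

Arguments Skern [n d1 s d2] rot nbr R k1 k2 k3 w w'.

From HB Require Import structures.
From mathcomp Require Import all_boot all_order all_algebra.
From mathcomp Require Import spectral complex.
From mathcomp Require Import ring zify.
From Stdlib Require Import ClassicalEpsilon.

Set Implicit Arguments.
Unset Strict Implicit.
Unset Printing Implicit Defensive.

Import Order.TTheory GRing.Theory Num.Theory Num.Def.

(* Let V = [n] x [d1]^s and let P = (I (x) A_H) G_{k2 mod s} (I (x) A_H), a
   kernel on V.  The proof compares the Gram operators S^* S and P^* P.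

   Conditioning on omega_1 = w fixes x_{k2}, the endpoint of
      the walk w; the only remaining randomness relevant to omega_2 is the
      label pair (a_{k2}, b_{k2}) and the free tail.  Hence
        S(w, w') = P(end w, w'.1) / L,   L = (d2^2)^(k3-k2-1).
   2. Walks are measure preserving: each step x |-> wstep x p is, summed over
      the d2^2 label pairs, d2^2 times a bijection on average (Rot is an
      involution and H is undirected).  So the endpoint of a uniform walk is
      uniform on V, and S^*S = A B, P^*P = B A, where A is the 0/1 matrix of
      the projection y |-> y.1 from W[k2+1,k3] to V and B = L^-1 (P^*P) A^T.
   3. Linear algebra: AB and BA have the same characteristic polynomial up to
      a power of X (Sylvester), and P^*P = Q^T Q is positive semidefinite, so
      the descending eigenvalue lists differ only by trailing zeros, and the
      second singular values agree. *)

Section Spectrum.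
Local Open Scope ring_scope.
Variable R : rcfType.

Lemma eigs_descE m (A : 'M[R]_m) (l : seq R) :
  sorted (fun a b => b <= a) l -> char_poly A = \prod_(x <- l) ('X - x%:P) ->
  eigs_desc A = l.
Proof.
move=> sl cl; rewrite /eigs_desc.
set P := (fun l0 : seq R => _).
have [] : P (epsilon (inhabits [::]) P) by apply: epsilon_spec; exists l.
move=> s2 c2; apply: (sorted_eq (leT := fun a b => b <= a)) => //.
- by move=> a b c /= h1 h2; apply: le_trans h2 h1.
- by move=> a b /andP[h1 h2]; apply/eqP; rewrite eq_le h1 h2.
- by apply: prod_XsubC_eq; rewrite -c2 -cl.
Qed.

(* Sylvester's identity for rectangular products, via block determinants:
   X^q chi(AB) = X^p chi(BA). *)
Lemma char_poly_mulmx_rect (F : idomainType) (p q : nat)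
  (A : 'M[F]_(p, q)) (B : 'M[F]_(q, p)) :
  'X ^+ q * char_poly (A *m B) = 'X ^+ p * char_poly (B *m A).
Proof.
rewrite /char_poly /char_poly_mx !map_mxM.
set Ap := map_mx polyC A; set Bp := map_mx polyC B.
pose M := block_mx ('X%:M : 'M_p) Ap Bp (1%:M : 'M_q).
have detM_l : \det M = \det ('X%:M - Ap *m Bp).
  have := det_mulmx M (block_mx 1%:M 0 (- Bp) 1%:M).
  rewrite mulmx_block det_lblock !det1 mulr1 !mulmx1 !mulmx0 !mul1mx mulmxN !add0r.
  by rewrite subrr det_ublock det1 !mulr1 => <-.
have detM_r : \det M * 'X ^+ q = 'X ^+ p * \det ('X%:M - Bp *m Ap).
  have := det_mulmx M (block_mx 1%:M (- Ap) 0 ('X%:M)).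
  rewrite mulmx_block det_ublock det1 mul1r det_scalar => <-.
  rewrite !mulmx1 !mulmx0 !addr0 mul1mx mulmxN mul_mx_scalar.
  by rewrite mul_scalar_mx addNr addrC det_lblock det_scalar mulmxN.
by rewrite -detM_r mulrC detM_l.
Qed.

Lemma char_poly_mulmxC (F : idomainType) (m : nat) (A B : 'M[F]_m) :
  char_poly (A *m B) = char_poly (B *m A).
Proof.
apply: (@mulfI _ ('X ^+ m)); first by rewrite expf_neq0 // polyX_eq0.
exact: char_poly_mulmx_rect.
Qed.

Section GramSpectrum.
Local Open Scope complex_scope.

(* A Gram matrix Q^T Q has a split characteristic polynomial with
   nonnegative roots: it is Hermitian over R[i], hence unitarily
   diagonalisable, and conjugating it by the diagonalising unitary U gives
   Y Y^* with Y = U Q^T, whose diagonal is nonnegative. *)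
Lemma gram_roots k m (Q : 'M[R]_(k, m)) : exists l : seq R,
  all (fun x => 0 <= x) l /\ char_poly (Q^T *m Q) = \prod_(x <- l) ('X - x%:P).
Proof.
pose f := real_complex R.
have freal x : f x \is Num.real by rewrite complex_real.
pose Qc := map_mx f Q; pose Gc := Qc^T *m Qc.
have eG : map_mx f (Q^T *m Q) = Gc by rewrite map_mxM -map_trmx.
have Qcc : map_mx conjC Qc = Qc.
  by apply/matrixP => i j; rewrite !mxE; exact: conj_Creal (freal _).
have Gh : Gc \is hermsymmx.
  apply/is_hermitianmxP; rewrite expr0 scale1r.
  apply/matrixP => i j; rewrite !mxE rmorph_sum; apply: eq_bigr => l _.
  rewrite !mxE rmorphM mulrC; congr (_ * _); symmetry; exact: conj_Creal.
set U := spectralmx Gc; set d := spectral_diag Gc.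
have eGc : Gc = invmx U *m diag_mx d *m U.
  by move/orthomx_spectralP: (hermitian_normalmx Gh).
have dreal := hermitian_spectral_diag_real Gh.
have Uunit := spectral_unit Gc.
have cGc : char_poly Gc = \prod_i ('X - (d 0 i)%:P).
  rewrite eGc -mulmxA char_poly_mulmxC -mulmxA mulmxV // mulmx1.
  rewrite char_poly_trig ?diag_mx_is_trig //; apply: eq_bigr => i _.
  by rewrite mxE eqxx mulr1n.
pose l0 := [seq complex.Re (d 0 i) | i <- enum 'I_m].
have cG : char_poly (Q^T *m Q) = \prod_(x <- l0) ('X - x%:P).
  apply: (@map_poly_inj _ _ f).
  rewrite map_char_poly eG cGc map_prod_XsubC big_map big_enum /=.
  apply: eq_bigr => i _; rewrite RRe_real //.
  by move/mxOverP: dreal; apply.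
have dge0 i : 0 <= complex.Re (d 0 i).
  have ed : diag_mx d = U *m Gc *m invmx U.
    by rewrite eGc !mulmxA mulmxV // mul1mx -mulmxA mulmxV // mulmx1.
  pose Y := U *m Qc^T.
  have eY : U *m Gc *m invmx U = Y *m (map_mx conjC Y^T).
    rewrite invmx_unitary ?spectral_unitarymx // /Y trmx_mul map_mxM trmxK Qcc.
    by rewrite /Gc !mulmxA.
  have : 0 <= d 0 i.
    have -> : d 0 i = diag_mx d i i by rewrite mxE eqxx mulr1n.
    rewrite ed eY mxE; apply: sumr_ge0 => j _; rewrite !mxE.
    exact: mul_conjC_ge0.
  by rewrite -(RRe_real (mxOverP dreal 0 i)) ler0c.
by exists l0; split => //; apply/allP => x /mapP [i _ ->].
Qed.

End GramSpectrum.

Lemma gram_spectrum k m (Q : 'M[R]_(k, m)) : exists l : seq R,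
  [/\ sorted (fun a b => b <= a) l, all (fun x => 0 <= x) l &
      char_poly (Q^T *m Q) = \prod_(x <- l) ('X - x%:P)].
Proof.
have [l0 [l0_ge0 cG]] := gram_roots Q.
have l0_sort := permEl (perm_sort (fun a b => b <= a) l0).
exists (sort (fun a b => b <= a) l0); split.
- by apply: sort_sorted => a b; apply: le_total.
- by rewrite (perm_all _ l0_sort).
- by rewrite cG; apply: perm_big; rewrite perm_sym.
Qed.

Lemma prod_XsubC_nseq0 r : \prod_(x <- nseq r (0 : R)) ('X - x%:P) = 'X ^+ r.
Proof.
elim: r => [|r IH]; first by rewrite big_nil expr0.
by rewrite /= big_cons IH subr0 exprS.
Qed.

Lemma path_ge_nseq0 r (y : R) : 0 <= y -> path (fun a b => b <= a) y (nseq r 0).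
Proof. by elim: r y => [|r IH] y hy //=; rewrite hy IH. Qed.

(* If BA (of the smaller size q <= p) is a Gram matrix, then AB and BA have
   the same second largest "singular value" sqrt(eigenvalue): the spectrum of
   AB is that of BA followed by p - q zeros, and the spectrum of BA is
   nonnegative, so the zeros come last in the descending order. *)
Lemma sqrt_eig2_mulmxC p q k (A : 'M[R]_(p, q)) (B : 'M[R]_(q, p))
  (Q : 'M[R]_(k, q)) : (q <= p)%N -> B *m A = Q^T *m Q ->
  nth 0 (map Num.sqrt (eigs_desc (A *m B))) 1 =
  nth 0 (map Num.sqrt (eigs_desc (B *m A))) 1.
Proof.
move=> hqp eBA.
have [l [sl al cl]] := gram_spectrum Q.
have eigsBA : eigs_desc (B *m A) = l by apply: eigs_descE => //; rewrite eBA.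
set r := (p - q)%N.
have eigsAB : eigs_desc (A *m B) = l ++ nseq r 0.
  apply: eigs_descE.
    case: l sl al {eigsBA cl} => [|x l1] sl al.
      by case: r => //= r; apply: path_ge_nseq0.
    rewrite /= cat_path; rewrite /= in sl; rewrite sl /=.
    by apply: path_ge_nseq0; move/allP: al; apply; rewrite mem_last.
  apply: (@mulfI _ ('X ^+ q)); first by rewrite expf_neq0 // polyX_eq0.
  rewrite char_poly_mulmx_rect big_cat /= prod_XsubC_nseq0 eBA cl.
  have hX : 'X^p = 'X^q * 'X^r :> {poly R} by rewrite -exprD subnKC.
  by rewrite hX -!mulrA [_ * 'X^r]mulrC.
rewrite eigsAB eigsBA map_cat nth_cat size_map.
case: ltnP => // h; rewrite [RHS]nth_default ?size_map //.
by elim: (r) (1 - size l)%N => [|r' IH] [|j] //=; rewrite sqrtr0.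
Qed.

End Spectrum.

Lemma card_set_sum (T : finType) (P : pred T) :
  #|[set x | P x]| = \sum_x (P x : nat).
Proof.
rewrite -sum1dep_card big_mkcond /=; apply: eq_bigr => x _.
by case: (P x).
Qed.

Lemma big_tuple_cons (R : Type) (idx : R) (op : Monoid.com_law idx)
  (T : finType) K (F : K.+1.-tuple T -> R) :
  \big[op/idx]_t F t = \big[op/idx]_p \big[op/idx]_(t : K.-tuple T) F [tuple of p :: t].
Proof.
rewrite pair_big /=.
rewrite (reindex (fun pt : T * K.-tuple T => [tuple of pt.1 :: pt.2])) //.
exists (fun t : K.+1.-tuple T => (thead t, [tuple of behead t])).
  by move=> [p t] _ /=; rewrite theadE; congr (_, _); apply: val_inj.
by move=> t _ /=; rewrite -tuple_eta.
Qed.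

Lemma sum_eq_mul (T : finType) (u0 : T) (b : nat) :
  (\sum_(p : T) ((p == u0) * b))%N = b.
Proof. by rewrite (bigD1 u0) //= eqxx mul1n big1 ?addn0 // => p /negPf ->. Qed.

Lemma sum_tuple_eq (T : finType) K (v : seq T) : size v = K ->
  (\sum_(t : K.-tuple T) (val t == v))%N = 1%N.
Proof.
move=> hv; have hv' : size v == K by rewrite hv.
rewrite (bigD1 (Tuple hv')) //= eqxx big1 ?addn0 // => t.
by rewrite -val_eqE /= => /negPf ->.
Qed.

Lemma card_prefix (T : finType) K a (u : seq T) : size u = a -> (a <= K)%N ->
  #|[set t : K.-tuple T | take a t == u]| = (#|T| ^ (K - a))%N.
Proof.
elim: K a u => [|K IH] [|a] [|u0 u] //= hs ha;
  rewrite card_set_sum; last rewrite big_tuple_cons /=.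
1,2: by rewrite (eq_bigr (fun _ => 1%N)) ?sum1_card ?card_tuple // => t _; rewrite take0.
rewrite (eq_bigr (fun p => (p == u0) * #|[set t : K.-tuple T | take a t == u]|)%N).
  by rewrite sum_eq_mul IH //; case: hs.
move=> p _; rewrite card_set_sum big_distrr /=; apply: eq_bigr => t _.
by rewrite eqseq_cons; case: (p == u0); case: (take a t == u).
Qed.

Lemma card_prefix_suffix (T : finType) K a (u v : seq T) (Qp : pred (seq T)) :
  size u = a -> size v = (K - a.+1)%N -> (a < K)%N ->
  #|[set t : K.-tuple T | [&& take a t == u, Qp (take a.+1 t) & drop a.+1 t == v]]|
  = #|[set p | Qp (rcons u p)]|.
Proof.
elim: a K u Qp => [|a IH] [|K] [|u0 u] Qp //= hu hv ha.
- rewrite [LHS]card_set_sum big_tuple_cons card_set_sum; apply: eq_bigr => p _ /=.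
  rewrite (eq_bigr (fun t : K.-tuple T => (Qp [:: p] * (val t == v))%N)).
    by rewrite -big_distrr /= sum_tuple_eq ?muln1 // hv subn1.
  by move=> t _; rewrite /= take0 drop0; case: (Qp _); case: (_ == v).
- rewrite [LHS]card_set_sum big_tuple_cons.
  rewrite (eq_bigr (fun p => (p == u0) *
     #|[set t : K.-tuple T | [&& take a t == u, Qp (u0 :: take a.+1 t) & drop a.+1 t == v]]|)%N).
    by rewrite sum_eq_mul (IH K u (fun s => Qp (u0 :: s))) //; case: hu.
  move=> p _; rewrite card_set_sum big_distrr /=; apply: eq_bigr => t _.
  by rewrite eqseq_cons; case: (eqVneq p u0) => [->|] //=; rewrite mul1n.
Qed.

Lemma card_fst (A B : finType) (x0 : A) (P : A -> B -> bool) :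
  #|[set om : A * B | (om.1 == x0) && P om.1 om.2]| = #|[set t | P x0 t]|.
Proof.
rewrite !card_set_sum -(pair_bigA _ (fun a b => ((a == x0) && P a b : nat))) /=.
rewrite (bigD1 x0) //= [X in (_ + X)%N]big1 ?addn0.
  by apply: eq_bigr => b _; rewrite eqxx.
by move=> a /negPf ha; apply: big1 => b _; rewrite ha.
Qed.

Local Open Scope ring_scope.

Lemma sum_delta (R : pzRingType) (T : finType) (c : T) (F : T -> R) :
  \sum_z (c == z)%:R * F z = F c.
Proof.
rewrite (bigD1 c) //= eqxx mul1r big1 ?addr0 // => z /negPf.
by rewrite eq_sym => ->; rewrite mul0r.
Qed.

Lemma card_set_sumR (R : pzRingType) (T : finType) (P : pred T) :
  (#|[set x | P x]|%:R : R) = \sum_x (P x)%:R.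
Proof. by rewrite card_set_sum natr_sum. Qed.

Lemma sum_enum_val (R : pzRingType) (T : finType) (F : T -> R) :
  \sum_(i < #|T|) F (enum_val i) = \sum_z F z.
Proof.
rewrite (reindex (@enum_val T T)) //.
by exists (@enum_rank T) => x _; [apply: enum_valK | apply: enum_rankK].
Qed.

Lemma eq_enum_val (T : finType) (x : T) (j : 'I_#|T|) :
  (x == enum_val j) = (enum_rank x == j).
Proof. by rewrite -(inj_eq (@enum_rank_inj T)) enum_valK. Qed.

Section Walks.
Variables (n d1 s d2 : nat) (rot : 'I_n * 'I_d1 -> 'I_n * 'I_d1)
  (nbr : {ffun 'I_s -> 'I_d1} -> 'I_d2 -> {ffun 'I_s -> 'I_d1}).
Hypothesis rot_invol : forall p, rot (rot p) = p.
Hypothesis H_undir :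
  forall u w, #|[set a | nbr u a == w]| = #|[set a | nbr w a == u]|.
Variable R : rcfType.
Local Notation V := (Vtx n d1 s).

Lemma Rotm_invol j : involutive (Rotm (s:=s) rot j).
Proof.
move=> x; rewrite /Rotm; case: pickP => [t _|] //=.
rewrite ffunE eqxx /= -surjective_pairing rot_invol /=.
case: x => [x1 x2] /=; congr (_, _); apply/ffunP => u; rewrite !ffunE.
by case: eqP => [->|].
Qed.

Lemma sum_Rotm j (F : V -> R) : \sum_x F (Rotm rot j x) = \sum_x F x.
Proof. by rewrite [RHS](reindex_inj (inv_inj (Rotm_invol j))). Qed.

(* Since H is undirected, each vertex w has, summed over all labels a, exactly
   d2 preimages u with nbr u a = w. *)
Lemma sum_nbr (g : {ffun 'I_s -> 'I_d1} -> R) :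
  \sum_(a : 'I_d2) \sum_u g (nbr u a) = d2%:R * \sum_w g w.
Proof.
transitivity (\sum_w g w * \sum_u (#|[set a | nbr u a == w]|%:R : R)).
  rewrite (eq_bigr (fun a => \sum_u \sum_w (nbr u a == w)%:R * g w)); last first.
    by move=> a _; apply: eq_bigr => u _; rewrite sum_delta.
  rewrite exchange_big /=.
  rewrite (eq_bigr (fun u => \sum_w \sum_a (nbr u a == w)%:R * g w)); last first.
    by move=> u _; rewrite exchange_big.
  rewrite exchange_big /=; apply: eq_bigr => w _; rewrite mulr_sumr.
  apply: eq_bigr => u _.
  by rewrite card_set_sumR mulr_sumr; apply: eq_bigr => a _; rewrite mulrC.
rewrite mulr_sumr; apply: eq_bigr => w _; rewrite mulrC; congr (_ * _).
rewrite (eq_bigr (fun u => \sum_a (nbr w a == u)%:R)); last first.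
  by move=> u _; rewrite H_undir card_set_sumR.
rewrite exchange_big /= (eq_bigr (fun _ => 1)) ?sumr_const ?card_ord // => a _.
by rewrite (eq_bigr (fun u => (nbr w a == u)%:R * 1)) ?sum_delta // => u _; rewrite mulr1.
Qed.

Lemma sum_Hstep (F : V -> R) :
  \sum_(a : 'I_d2) \sum_x F (Hstep nbr a x) = d2%:R * \sum_x F x.
Proof.
rewrite (eq_bigr (fun a => \sum_v \sum_u F (v, nbr u a))); last first.
  by move=> a _; rewrite pair_bigA.
have -> : \sum_x F x = \sum_v \sum_u F (v, u) by rewrite pair_bigA; apply: eq_bigr => -[].
rewrite exchange_big /= mulr_sumr; apply: eq_bigr => v _.
exact: (sum_nbr (fun u => F (v, u))).
Qed.

Lemma sum_wstep j (F : V -> R) :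
  \sum_(p : Lab d2) \sum_x F (wstep rot nbr j x p) = (d2 * d2)%:R * \sum_x F x.
Proof.
have -> : \sum_(p : Lab d2) \sum_x F (wstep rot nbr j x p) =
  \sum_a \sum_b \sum_x F (Hstep nbr b (Rotm rot j (Hstep nbr a x))).
  rewrite (pair_bigA _ (fun a b => \sum_x F (Hstep nbr b (Rotm rot j (Hstep nbr a x))))).
  by apply: eq_bigr => -[].
rewrite (eq_bigr (fun a => \sum_x \sum_b F (Hstep nbr b (Rotm rot j (Hstep nbr a x)))));
  last by move=> a _; rewrite exchange_big.
rewrite (sum_Hstep (fun y => \sum_b F (Hstep nbr b (Rotm rot j y)))).
rewrite exchange_big /= (eq_bigr (fun b => \sum_x F (Hstep nbr b x))); last first.
  by move=> b _; rewrite (sum_Rotm j (fun y => F (Hstep nbr b y))).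
by rewrite sum_Hstep natrM mulrA.
Qed.

Lemma sum_walk K j (F : V -> R) :
  \sum_(t : K.-tuple (Lab d2)) \sum_x F (walk rot nbr j x t) =
  ((d2 * d2) ^ K)%:R * \sum_x F x.
Proof.
elim: K j F => [|K IH] j F.
  rewrite (eq_bigr (fun _ => \sum_x F x)); last by move=> t _; rewrite [t]tuple0.
  by rewrite sumr_const card_tuple !expn0 mul1r.
rewrite big_tuple_cons /= exchange_big /=.
rewrite (eq_bigr (fun t : K.-tuple (Lab d2) =>
   (d2 * d2)%:R * \sum_x F (walk rot nbr j.+1 x t))); last first.
  by move=> t _; rewrite (sum_wstep j (fun y => F (walk rot nbr j.+1 y t))).
by rewrite -mulr_sumr IH expnS !natrM !mulrA.
Qed.

Lemma walk_rcons j x (u : seq (Lab d2)) p :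
  walk rot nbr j x (rcons u p) = wstep rot nbr (j + size u) (walk rot nbr j x u) p.
Proof.
elim: u j x => [|q u IH] j x /=; first by rewrite addn0.
by rewrite IH addSnnS.
Qed.

Lemma IAH_E (x z : V) :
  IAH nbr R x z = d2%:R^-1 * \sum_(a : 'I_d2) (Hstep nbr a x == z)%:R.
Proof.
rewrite /IAH /AH card_set_sumR mulrA mulrC; congr (_ * _); rewrite mulr_sumr.
apply: eq_bigr => a _; case: x z => x1 x2 [z1 z2] /=.
rewrite /Hstep /= xpair_eqE.
by case: (nbr x2 a == z2); case: (x1 == z1); rewrite /= ?mulr1 ?mulr0.
Qed.

Lemma Pker_E j (x y : V) : Pker rot nbr R j x y =
  d2%:R^-1 * d2%:R^-1 * \sum_(a : 'I_d2) \sum_(b : 'I_d2)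
     (Hstep nbr b (Rotm rot j (Hstep nbr a x)) == y)%:R.
Proof.
rewrite /Pker (eq_bigr (fun z => IAH nbr R x z * IAH nbr R (Rotm rot j z) y)); last first.
  move=> z _; rewrite -(sum_delta (Rotm rot j z) (fun z' => IAH nbr R x z * IAH nbr R z' y)).
  by apply: eq_bigr => z' _; rewrite /Gperm [_ * (Rotm _ _ _ == _)%:R]mulrC -!mulrA.
rewrite (eq_bigr (fun z => d2%:R^-1 *
   \sum_(a : 'I_d2) (Hstep nbr a x == z)%:R * IAH nbr R (Rotm rot j z) y)); last first.
  by move=> z _; rewrite IAH_E -mulrA mulr_suml.
rewrite -mulr_sumr exchange_big /= -mulrA; congr (_ * _).
rewrite (eq_bigr (fun a => IAH nbr R (Rotm rot j (Hstep nbr a x)) y)); last first.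
  by move=> a _; rewrite sum_delta.
by rewrite mulr_sumr; apply: eq_bigr => a _; rewrite IAH_E.
Qed.

Lemma card_wstep j (x y : V) :
  (#|[set p | wstep rot nbr j x p == y]|%:R : R) =
  \sum_(a : 'I_d2) \sum_(b : 'I_d2) (Hstep nbr b (Rotm rot j (Hstep nbr a x)) == y)%:R.
Proof.
rewrite card_set_sumR.
rewrite (pair_bigA _ (fun a b => (Hstep nbr b (Rotm rot j (Hstep nbr a x)) == y)%:R)).
by apply: eq_bigr => -[].
Qed.

Lemma Skern_E k1 k2 k3 (h12 : (k1 <= k2)%N) (h23 : (k2 < k3)%N)
  (w : Wset n d1 s d2 k1 k2) (w' : Wset n d1 s d2 k2.+1 k3) :
  Skern rot nbr R k1 k2 k3 w w' =
  #|[set p | wstep rot nbr k2 (walk rot nbr k1 w.1 w.2) p == w'.1]|%:R /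
  ((d2 * d2) ^ (k3 - k2))%:R.
Proof.
rewrite /Skern /=.
rewrite (@card_fst _ _ _ (fun a (t : (k3 - k1).-tuple (Lab d2)) =>
   [&& take (k2 - k1) t == val w.2, walk rot nbr k1 a (take (k2 - k1).+1 t) == w'.1
     & drop (k2 - k1).+1 t == val w'.2])).
rewrite (@card_fst _ _ _ (fun a (t : (k3 - k1).-tuple (Lab d2)) =>
   take (k2 - k1) t == val w.2)).
rewrite card_prefix ?size_tuple //; last by lia.
rewrite (@card_prefix_suffix _ _ _ _ _ (fun u => walk rot nbr k1 w.1 u == w'.1))
  ?size_tuple //; try lia.
rewrite card_prod card_ord.
have -> : (k3 - k1 - (k2 - k1) = k3 - k2)%N by lia.
congr (_%:R / _); apply: eq_card => p; rewrite !inE walk_rcons size_tuple.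
by have -> : (k1 + (k2 - k1) = k2)%N by lia.
Qed.

End Walks.

Section Gram.
Variables (R : rcfType) (n d1 s d2 : nat)
  (rot : 'I_n * 'I_d1 -> 'I_n * 'I_d1)
  (nbr : {ffun 'I_s -> 'I_d1} -> 'I_d2 -> {ffun 'I_s -> 'I_d1}).
Hypotheses (hn : (0 < n)%N) (hd1 : (0 < d1)%N) (hd2 : (0 < d2)%N).
Hypothesis rot_invol : forall p, rot (rot p) = p.
Hypothesis H_undir :
  forall u w, #|[set a | nbr u a == w]| = #|[set a | nbr w a == u]|.
Variables (k1 k2 k3 : nat) (h12 : (k1 <= k2)%N) (h23 : (k2 < k3)%N).

Local Notation V := (Vtx n d1 s).
Local Notation X1 := (Wset n d1 s d2 k1 k2).
Local Notation Y2 := (Wset n d1 s d2 k2.+1 k3).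
Local Notation P := (Pker rot nbr R k2).
Local Notation S := (Skern rot nbr R k1 k2 k3).

(* number of vertices, of free tails of omega_2, and of label sequences of
   omega_1 *)
Let N := #|{: V}|.
Let L := ((d2 * d2) ^ (k3 - k2.+1))%N.
Let M := ((d2 * d2) ^ (k2 - k1))%N.

Let nat_neq0 k : (0 < k)%N -> (k%:R : R) != 0.
Proof. by rewrite pnatr_eq0 -lt0n. Qed.

Let N_neq0 : (N%:R : R) != 0.
Proof.
by apply: nat_neq0; rewrite /N card_prod card_ord card_ffun card_ord muln_gt0 hn expn_gt0 hd1.
Qed.

Let L_neq0 : (L%:R : R) != 0.
Proof. by apply: nat_neq0; rewrite /L expn_gt0 muln_gt0 hd2. Qed.

Let M_neq0 : (M%:R : R) != 0.
Proof. by apply: nat_neq0; rewrite /M expn_gt0 muln_gt0 hd2. Qed.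

Lemma card_W a b : #|{: Wset n d1 s d2 a b}| = (N * (d2 * d2) ^ (b - a))%N.
Proof.
by rewrite card_prod card_tuple; congr (_ * _ ^ _)%N; rewrite card_prod !card_ord.
Qed.

Lemma Skern_Pker (w : X1) (w' : Y2) :
  S w w' = P (walk rot nbr k1 w.1 w.2) w'.1 / L%:R.
Proof.
rewrite (Skern_E rot nbr R h12 h23) (Pker_E rot nbr R) -(card_wstep rot nbr R).
have -> : (k3 - k2 = (k3 - k2.+1).+1)%N by lia.
rewrite expnS natrM -/L.
have h2 := nat_neq0 hd2.
by field; rewrite L_neq0 h2.
Qed.

Lemma gram_Pker (y y' : V) :
  wgram (@unif R _) (@unif R _) P y y' = \sum_z P z y * P z y'.
Proof. by rewrite /wgram /wadj /unif; apply: eq_bigr => z _; field; exact: N_neq0. Qed.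

(* Step 2: as walk endpoints are uniform, S^*S (y, y') only sees y.1, y'.1. *)
Lemma gram_Skern (y y' : Y2) :
  wgram (@unif R _) (@unif R _) S y y' = L%:R^-1 * \sum_x P x y.1 * P x y'.1.
Proof.
rewrite /wgram /wadj /unif !card_W -/L -/M.
rewrite (eq_bigr (fun w : X1 => (N * L)%:R / (N * M)%:R / L%:R / L%:R *
    (P (walk rot nbr k1 w.1 w.2) y.1 * P (walk rot nbr k1 w.1 w.2) y'.1))); last first.
  by move=> w _; rewrite !Skern_Pker; field; rewrite L_neq0 M_neq0 N_neq0.
rewrite -mulr_sumr -(pair_bigA _ (fun x (t : (k2 - k1).-tuple (Lab d2)) =>
    P (walk rot nbr k1 x t) y.1 * P (walk rot nbr k1 x t) y'.1)) /=.
rewrite exchange_big /= (sum_walk rot_invol H_undir _ _ (fun z => P z y.1 * P z y'.1)).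
by rewrite -/M !natrM; field; rewrite L_neq0 N_neq0 M_neq0.
Qed.

Definition proj_mx : 'M[R]_(#|{: Y2}|, #|{: V}|) :=
  \matrix_(i, j) ((enum_val i).1 == enum_val j)%:R.

Definition gramP_mx : 'M[R]_#|{: V}| := kmx (wgram (@unif R _) (@unif R _) P).

Lemma gramP_mxE : gramP_mx = (kmx P)^T *m kmx P.
Proof.
apply/matrixP => j k; rewrite !mxE gram_Pker -sum_enum_val.
by apply: eq_bigr => l _; rewrite !mxE.
Qed.

(* Every vertex has exactly L preimages under the projection. *)
Lemma proj_mx_gram : proj_mx^T *m proj_mx = L%:R%:M.
Proof.
apply/matrixP => j k; rewrite !mxE.
rewrite (eq_bigr (fun i => ((enum_val i).1 == enum_val j)%:R *
  ((enum_val i).1 == enum_val k)%:R)); last by move=> i _; rewrite !mxE.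
rewrite (sum_enum_val (fun y : Y2 => (y.1 == enum_val j)%:R * (y.1 == enum_val k)%:R)).
rewrite -(pair_bigA _ (fun (x : V) (t : (k3 - k2.+1).-tuple (Lab d2)) =>
   (x == enum_val j)%:R * (x == enum_val k)%:R)) /=.
rewrite (eq_bigr (fun x : V => (enum_val j == x)%:R * ((x == enum_val k)%:R * L%:R)));
  last first.
  move=> x _; rewrite sumr_const card_tuple card_prod card_ord -/L.
  by rewrite -mulrnAr -[_ *+ L]mulr_natr eq_sym.
rewrite (sum_delta _ (fun i => (i == enum_val k)%:R * L%:R)) (inj_eq enum_val_inj).
by case: (j == k); rewrite ?mul1r ?mul0r.
Qed.

(* B = L^-1 (P^*P) A^T, so that B A = P^*P and A B = S^*S. *)
Definition gram_cofactor := L%:R^-1 *: (gramP_mx *m proj_mx^T).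

Lemma gramP_factor : gram_cofactor *m proj_mx = gramP_mx.
Proof.
by rewrite /gram_cofactor -scalemxAl -mulmxA proj_mx_gram mul_mx_scalar scalerA
  mulVf ?scale1r.
Qed.

Lemma gramS_factor :
  kmx (wgram (@unif R _) (@unif R _) S) = proj_mx *m gram_cofactor.
Proof.
apply/matrixP => i i'; rewrite !mxE gram_Skern.
rewrite (eq_bigr (fun j => (enum_rank (enum_val i).1 == j)%:R *
     (L%:R^-1 * \sum_k gramP_mx j k * ((enum_rank (enum_val i').1 == k)%:R))));
  last first.
  move=> j _; rewrite !mxE eq_enum_val; congr (_ * _); congr (_ * _).
  by apply: eq_bigr => k _; rewrite !mxE eq_enum_val.
rewrite sum_delta; congr (_ * _).
rewrite (eq_bigr (fun k => (enum_rank (enum_val i').1 == k)%:R *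
  gramP_mx (enum_rank (enum_val i).1) k)); last by move=> k _; rewrite mulrC.
by rewrite sum_delta /gramP_mx mxE !enum_rankK gram_Pker.
Qed.

(* A is a tall matrix: V is not larger than W[k2+1,k3]. *)
Lemma card_V_le_W : (#|{: V}| <= #|{: Y2}|)%N.
Proof. by rewrite card_W leq_pmulr // expn_gt0 muln_gt0 hd2. Qed.

End Gram.

Theorem mainTheorem6
  (R : rcfType) (n d1 s d2 : nat)
  (rot : 'I_n * 'I_d1 -> 'I_n * 'I_d1)
  (nbr : {ffun 'I_s -> 'I_d1} -> 'I_d2 -> {ffun 'I_s -> 'I_d1})
  (hn : (0 < n)%N) (hd1 : (0 < d1)%N) (hd2 : (0 < d2)%N) (hs : (0 < s)%N)
  (* rot is a rotation map of an undirected d1-regular graph on [n] *)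
  (rot_invol : forall p, rot (rot p) = p)
  (* ... which is locally invertible *)
  (rot_loc : exists2 phi : 'I_d1 -> 'I_d1, bijective phi &
               forall v a, (rot (v, a)).2 = phi a)
  (* H is an undirected d2-regular graph with edge labeling nbr *)
  (H_undir : forall u w, #|[set a | nbr u a == w]| = #|[set a | nbr w a == u]|)
  (k1 k2 k3 : nat) (h12 : (k1 <= k2)%N) (h23 : (k2 < k3)%N) :
  sigma2 (Skern rot nbr R k1 k2 k3) = sigma2 (Pker rot nbr R k2).
Proof.
rewrite /sigma2 /sing_vals (gramS_factor R hn hd1 hd2 rot_invol H_undir h12 h23).
rewrite -/(gramP_mx R rot nbr k2) -(gramP_factor R rot nbr hd2 k2 k3).
apply: (sqrt_eig2_mulmxC (Q := kmx (Pker rot nbr R k2))).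
  exact: card_V_le_W.
by rewrite gramP_factor //; apply: gramP_mxE.
Qed.
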